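(* Let $\Sigma$ be an alphabet, let $Z\subseteq \Sigma^{\mathbb Z}$ be a sofic shift and let $f:\mathbb R^n\times Z\to\mathbb R^n$ be an arbitrary function. The system $$x(k+1)=f(x(k),\omega(k)),\qquad \omega(k+1)=\sigma(\omega(k)),\qquad x(0)=x_0\in\mathbb R^n,\ \omega(0)=\bar z\in Z$$ is globally uniformly asymptotically stable (GUAS) if and only if there exists a sequence-dependent Lyapunov function for it.
   Context: $\Sigma$ is a nonempty countable set (alphabet). $\Sigma^{\mathbb Z}$ is the set of bi-infinite sequences $\bar z=(z_k)_{k\in\mathbb Z}$ with $z_k\in\Sigma$, and $\sigma:\Sigma^{\mathbb Z}\to\Sigma^{\mathbb Z}$ is the shift, $\sigma(\bar z)_k=z_{k+1}$. A labeled graph on $\Sigma$ is $\mathcal G=(S,E)$ with $S$ a finite set of nodes and $E\subseteq S\times S\times\Sigma$. A bi-infinite walk labeled by $\bar z$ is a sequence $(e_k)_{k\in\mathbb Z}$ of edges $e_k=(s_k,s_{k+1},z_k)\in E$. $\mathcal Z(\mathcal G)$ is the set of $\bar z\in\Sigma^{\mathbb Z}$ labeling some bi-infinite walk. A set $Z\subseteq\Sigma^{\mathbb Z}$ is a sofic shift if $Z=\mathcal Z(\mathcal G)$ for some labeled graph $\mathcal G$ (so $\sigma(Z)=Z$). $\Phi(k,x_0,\bar z)$ denotes the state $x(k)$ of the solution of the system above (so $x(k+1)=f(x(k),\sigma^k(\bar z))$). Classes: $\alpha:\mathbb R_{\ge0}\to\mathbb R_{\ge0}$ is of class $\mathcal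 K$ if continuous, strictly increasing, $\alpha(0)=0$; of class $\mathcal K_\infty$ if moreover unbounded; $\beta:\mathbb R_{\ge0}\times\mathbb R_{\ge0}\to\mathbb R_{\ge0}$ is of class $\mathcal{KL}$ if continuous, $\beta(\cdot,s)\in\mathcal K$ for each $s$, and $\beta(r,\cdot)$ is decreasing with limit $0$ for each $r$. GUAS: there exists $\beta\in\mathcal{KL}$ with $|\Phi(k,x_0,\bar z)|\le\beta(|x_0|,k)$ for all $k\in\mathbb N$, $x_0\in\mathbb R^n$, $\bar z\in Z$. A sequence-dependent Lyapunov function is a function $\mathcal V:\mathbb R^n\times Z\to\mathbb R$ for which there exist $\alpha_1,\alpha_2\in\mathcal K_\infty$ and $\gamma\in[0,1)$ with $\alpha_1(|x|)\le\mathcal V(x,\bar z)\le\alpha_2(|x|)$ and $\mathcal V(f(x,\bar z),\sigma(\bar z))\le\gamma\,\mathcal V(x,\bar z)$ for all $x\in\mathbb R^n$, $\bar z\in Z$. *)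

From HB Require Import structures.
From mathcomp Require Import all_boot all_order all_algebra.
From mathcomp Require Import all_classical all_reals all_analysis.
Set Implicit Arguments. Unset Strict Implicit. Unset Printing Implicit Defensive.
Import Order.TTheory GRing.Theory Num.Theory.
Import numFieldNormedType.Exports.
Local Open Scope classical_set_scope.
Local Open Scope ring_scope.

Definition biseq (Sigma : Type) := int -> Sigma.

Definition shift (Sigma : Type) (z : biseq Sigma) : biseq Sigma :=
  fun k => z (k + 1)%R.

Definition graph_labels (Sigma : Type) (S : finType) (E : set (S * S * Sigma))
  : set (biseq Sigma) :=
  [set z | exists s : int -> S, forall k : int, E (s k, s (k + 1)%R, z k)].

Definition sofic (Sigma : Type) (Z : set (biseq Sigma)) : Prop :=
  exists (S : finType) (E : set (S * S * Sigma)), Z = graph_labels E.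

Definition enorm (R : realType) (n : nat) (x : 'rV[R]_n) : R :=
  Num.sqrt (\sum_(i < n) x ord0 i ^+ 2).

Fixpoint Phi (R : realType) (n : nat) (Sigma : Type)
  (f : 'rV[R]_n -> biseq Sigma -> 'rV[R]_n) (k : nat) (x0 : 'rV[R]_n)
  (z : biseq Sigma) : 'rV[R]_n :=
  match k with
  | O => x0
  | k'.+1 => f (Phi f k' x0 z) (iter k' (@shift Sigma) z)
  end.

Definition nonneg (R : realType) : set R := [set x | 0 <= x].

Definition classK (R : realType) (a : R -> R) : Prop :=
  [/\ {within [set x : R | 0 <= x], continuous a},
      (forall r s, 0 <= r -> r < s -> a r < a s),
      (forall r, 0 <= r -> 0 <= a r) &
      a 0 = 0].

Definition classKinf (R : realType) (a : R -> R) : Prop :=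
  classK a /\ (forall M : R, exists r, 0 <= r /\ M < a r).

Definition classKL (R : realType) (b : R -> R -> R) : Prop :=
  [/\ {within [set p : R * R | 0 <= p.1 /\ 0 <= p.2],
         continuous (fun p : R * R => b p.1 p.2)},
      (forall s, 0 <= s -> classK (fun r => b r s)) &
      (forall r, 0 <= r ->
         (forall s t, 0 <= s -> s <= t -> b r t <= b r s) /\
         (b r t @[t --> +oo] --> 0))].

Definition GUAS (R : realType) (n : nat) (Sigma : Type)
  (Z : set (biseq Sigma)) (f : 'rV[R]_n -> biseq Sigma -> 'rV[R]_n) : Prop :=
  exists b : R -> R -> R, classKL b /\
    forall (k : nat) (x0 : 'rV[R]_n) (z : biseq Sigma), Z z ->
      enorm (Phi f k x0 z) <= b (enorm x0) k%:R.

Definition seq_lyapunov (R : realType) (n : nat) (Sigma : Type)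
  (Z : set (biseq Sigma)) (f : 'rV[R]_n -> biseq Sigma -> 'rV[R]_n)
  (V : 'rV[R]_n -> biseq Sigma -> R) : Prop :=
  exists (a1 a2 : R -> R) (g : R),
    [/\ classKinf a1, classKinf a2, 0 <= g, g < 1 &
      forall (x : 'rV[R]_n) (z : biseq Sigma), Z z ->
        [/\ a1 (enorm x) <= V x z, V x z <= a2 (enorm x) &
            V (f x z) (shift z) <= g * V x z]].

(* Lyapunov to GUAS: along a trajectory V decays like g^k, so a1 |x(k)| <=
   g^k a2 |x0|; a K_inf bound for the inverse of a1 turns this into the KL
   bound A (e^{-(1-g) t} a2 r).
   GUAS to Lyapunov: given the KL bound b, take
   V (x, z) = sup_k 2^k psi |Phi (k, x, z)|, which halves along the dynamics and
   is at least psi |x|. It is finite and bounded by a K_inf function of |x| as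
   soon as psi s <= s / 2^tau(s), where tau(s) is the time after which every
   trajectory from the ball of radius 1/s stays below s: a point at distance
   s = b(r, k) with r <= 1/s is then only reached for k < tau(s).
   Every K_inf function needed is obtained from one regularization lemma, which
   majorizes a nondecreasing function vanishing at 0 by a K_inf function.
   Soficity of Z is used only through its shift invariance. *)

From HB Require Import structures.
From mathcomp Require Import all_boot all_order all_algebra.
From mathcomp Require Import all_classical all_reals all_analysis.
From mathcomp Require Import ring lra.
Set Implicit Arguments. Unset Strict Implicit. Unset Printing Implicit Defensive.
Import Order.TTheory GRing.Theory Num.Theory.
Import numFieldNormedType.Exports.
Import Num.Def.
Local Open Scope classical_set_scope.
Local Open Scope ring_scope.

Section continuity_within.
Variable R : realType.

Definition cont_within {T : pseudoMetricType R} (P : set T) (f : T -> R) (x : T) :=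
  f @ within P (nbhs x) --> f x.

Lemma cont_withinP {T : pseudoMetricType R} (P : set T) f x :
  cont_within P f x <-> forall e : R, 0 < e -> exists2 d : R, 0 < d &
    forall y, P y -> ball x d y -> `|f x - f y| < e.
Proof.
rewrite /cont_within; split => [/cvgrPdist_lt H e e0 | H].
  have := H e e0; rewrite near_withinE => /nbhs_ballP [d /= d0 Hd].
  by exists d => // y Py bxy; apply: Hd.
apply/cvgrPdist_lt => e e0; have [d d0 Hd] := H e e0.
rewrite near_withinE; near=> y => Py; apply: Hd => //; near: y; exact: nbhsx_ballx.
Unshelve. all: by end_near.
Qed.

Lemma cont_within_realP (P : set R) f x :
  cont_within P f x <-> forall e : R, 0 < e -> exists2 d : R, 0 < d &
    forall y, P y -> `|x - y| < d -> `|f x - f y| < e.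
Proof.
rewrite cont_withinP; split => H e e0; have [d d0 Hd] := H e e0;
  by exists d => // y Py; have := Hd y Py; rewrite -ball_normE.
Qed.

Lemma cont_within_continuous {T : pseudoMetricType R} (P : set T) f :
  (forall x, P x -> cont_within P f x) -> {within P, continuous f}.
Proof.
move=> H; rewrite continuous_subspace_in => x; rewrite inE => Px.
by have := H x Px; rewrite /cont_within nbhs_subspace_in.
Qed.

Lemma continuous_cont_within {T : pseudoMetricType R} (P : set T) f x :
  {within P, continuous f} -> P x -> cont_within P f x.
Proof. by move=> H Px; have := H x; rewrite /cont_within nbhs_subspace_in. Qed.

Lemma cont_within_for {T : pseudoMetricType R} (P : set T) f x :
  {for x, continuous f} -> cont_within P f x.
Proof. exact: cvg_within_filter. Qed.

Lemma cont_withinD {T : pseudoMetricType R} (P : set T) f g x :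
  cont_within P f x -> cont_within P g x -> cont_within P (fun y => f y + g y) x.
Proof. exact: cvgD. Qed.

Lemma cont_withinM {T : pseudoMetricType R} (P : set T) f g x :
  cont_within P f x -> cont_within P g x -> cont_within P (fun y => f y * g y) x.
Proof. exact: cvgM. Qed.

Lemma cont_within_comp {T : pseudoMetricType R} (P : set T) (Q : set R) g
    (f : R -> R) x :
  (forall y, P y -> Q (g y)) -> cont_within P g x -> cont_within Q f (g x) ->
  cont_within P (fun y => f (g y)) x.
Proof.
move=> PQ /cont_withinP Hg /cont_within_realP Hf; apply/cont_withinP => e e0.
have [d1 d10 H1] := Hf e e0; have [d2 d20 H2] := Hg d1 d10.
by exists d2 => // y Py bxy; apply: H1; [exact: PQ | exact: H2].
Qed.

Lemma eq_cont_within {T : pseudoMetricType R} (P : set T) f g x :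
  (forall y, P y -> f y = g y) -> P x -> cont_within P f x -> cont_within P g x.
Proof.
move=> fg Px /cont_withinP H; apply/cont_withinP => e e0.
have [d d0 Hd] := H e e0.
by exists d => // y Py bxy; rewrite -!fg //; exact: Hd.
Qed.

Lemma cont_within_gt0_ge0 (f : R -> R) (x : R) : 0 < x ->
  cont_within [set y : R | 0 < y] f x -> cont_within [set y : R | 0 <= y] f x.
Proof.
move=> x0 /cont_within_realP H; apply/cont_within_realP => e e0.
have [d d0 Hd] := H e e0; exists (minr d x); first by rewrite lt_min d0 x0.
move=> y y0; rewrite lt_min => /andP[yd yx]; apply: Hd => //.
by move: yx; rewrite ltr_norml /= in y0 * => /andP[] *; lra.
Qed.

End continuity_within.

(** * Class K and K_inf functions *)

Section classK_theory.
Variables (R : realType) (a : R -> R).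
Hypothesis Ka : classK a.

Lemma classK_continuous : {within [set x : R | 0 <= x], continuous a}.
Proof. by case: Ka. Qed.

Lemma classK_lt r s : 0 <= r -> r < s -> a r < a s.
Proof. by case: Ka => _ H _ _; apply: H. Qed.

Lemma classK_ge0 r : 0 <= r -> 0 <= a r.
Proof. by case: Ka => _ _ H _; apply: H. Qed.

Lemma classK0 : a 0 = 0.
Proof. by case: Ka. Qed.

Lemma classK_le r s : 0 <= r -> r <= s -> a r <= a s.
Proof.
by move=> r0; rewrite le_eqVlt => /predU1P[->//|rs]; exact: ltW (classK_lt r0 rs).
Qed.

Lemma classK_gt0 r : 0 < r -> 0 < a r.
Proof. by move=> r0; rewrite -classK0; exact: classK_lt. Qed.

Lemma classK_small e : 0 < e ->
  exists2 d, 0 < d & forall r, 0 <= r -> r < d -> a r < e.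
Proof.
move=> e0; have /cont_within_realP/(_ e e0) [d d0 Hd] :=
  continuous_cont_within classK_continuous (lexx 0).
exists d => // r r0 rd; have := Hd r r0; rewrite classK0 !sub0r !normrN.
by rewrite !ger0_norm ?classK_ge0 //; apply.
Qed.

End classK_theory.

Section squash.
Variable R : realType.

Definition squash (y : R) : R := 1 - (1 + y)^-1.
Definition unsquash (t : R) : R := (1 - t)^-1 - 1.

Lemma squash_ge0 y : 0 <= y -> 0 <= squash y.
Proof. by move=> y0; rewrite subr_ge0 invf_le1 ?lerDl // ltr_wpDr. Qed.

Lemma squash_lt1 y : 0 <= y -> squash y < 1.
Proof. by move=> y0; rewrite ltrBlDr ltrDl invr_gt0 ltr_wpDr. Qed.

Lemma squash_le y y' : 0 <= y -> y <= y' -> squash y <= squash y'.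
Proof.
move=> y0 yy'; rewrite lerB // lef_pV2 ?posrE ?ltr_wpDr ?lerD //.
exact: le_trans yy'.
Qed.

Lemma squashK y : unsquash (squash y) = y.
Proof.
rewrite /unsquash /squash (_ : 1 - (1 - _) = (1 + y)^-1) ?invrK; ring.
Qed.

Lemma unsquash_le t t' : t <= t' -> t' < 1 -> unsquash t <= unsquash t'.
Proof.
move=> tt' t'1; rewrite lerB // lef_pV2 ?posrE ?subr_gt0 ?lerB //.
exact: le_lt_trans t'1.
Qed.

Lemma unsquash_ge0 t : 0 <= t -> t < 1 -> 0 <= unsquash t.
Proof.
by move=> t0 t1; rewrite subr_ge0 invf_ge1 ?subr_gt0 // lerBlDr lerDl.
Qed.

Lemma unsquash_continuous t : t < 1 -> {for t, continuous unsquash}.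
Proof.
move=> t1; apply: cvgB; last exact: cvg_cst.
apply: cvgV; first by rewrite subr_eq0 gt_eqF.
by apply: cvgB; [exact: cvg_cst | exact: cvg_id].
Qed.

End squash.

Section classKinf_majorant.
Variables (R : realType) (F : R -> R).
Hypothesis F_ge0 : forall r, 0 <= r -> 0 <= F r.
Hypothesis F_le : forall r s, 0 <= r -> r <= s -> F r <= F s.
Hypothesis F_small : forall e, 0 < e ->
  exists2 d, 0 < d & forall r, 0 <= r -> r <= d -> F r <= e.

(* In the logarithmic variable v = ln r, the bounded nondecreasing function
   [G] is replaced by its 1-Lipschitz upper envelope, which is continuous;
   undoing both changes of variable and adding r makes it strictly increasing. *)
Let G (v : R) : R := squash (F (expR v)).
Let envelope (u : R) : R := sup [set G v - maxr (v - u) 0 | v in [set: R]].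
Let majorant (r : R) : R := if 0 < r then unsquash (envelope (ln r)) + r else 0.

Lemma log_squash_ge0 (v : R) : 0 <= G v.
Proof. exact/squash_ge0/F_ge0/expR_ge0. Qed.

Lemma log_squash_lt1 (v : R) : G v < 1.
Proof. exact/squash_lt1/F_ge0/expR_ge0. Qed.

Lemma log_squash_le (v w : R) : v <= w -> G v <= G w.
Proof.
by move=> vw; apply/squash_le/F_le; rewrite ?F_ge0 ?expR_ge0 ?ler_expR.
Qed.

Lemma envelope_ub (u : R) : has_ubound [set G v - maxr (v - u) 0 | v in [set: R]].
Proof.
exists 1 => _ [v _ <-]; apply: le_trans (ltW (log_squash_lt1 v)).
by rewrite lerBlDr lerDl le_max lexx orbT.
Qed.

Lemma envelope_ne (u : R) : [set G v - maxr (v - u) 0 | v in [set: R]] !=set0.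
Proof. by exists (G u - maxr (u - u) 0); exists u. Qed.

Lemma envelope_ge (u : R) : G u <= envelope u.
Proof.
apply: ub_le_sup; first exact: envelope_ub.
by exists u; rewrite // subrr maxxx subr0.
Qed.

Lemma envelope_ge0 (u : R) : 0 <= envelope u.
Proof. exact: le_trans (log_squash_ge0 u) (envelope_ge u). Qed.

Lemma envelope_le_next (u : R) : envelope u <= G (u + 1).
Proof.
apply: ge_sup; first exact: envelope_ne.
move=> _ [v _ <-]; have [vu|uv] := lerP v (u + 1).
  by apply: le_trans (log_squash_le vu); rewrite lerBlDr lerDl le_max lexx orbT.
apply: le_trans (log_squash_ge0 _); rewrite subr_le0.
by apply: le_trans (ltW (log_squash_lt1 v)) _; rewrite le_max; lra.
Qed.

Lemma envelope_lt1 (u : R) : envelope u < 1.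
Proof. exact: le_lt_trans (envelope_le_next u) (log_squash_lt1 _). Qed.

Lemma envelope_le (u u' : R) : u <= u' -> envelope u <= envelope u'.
Proof.
move=> uu'; apply: ge_sup; first exact: envelope_ne.
move=> _ [v _ <-]; apply: le_trans (ub_le_sup (envelope_ub u') _); last by exists v.
rewrite lerB // ge_max; apply/andP; split; last by rewrite le_max lexx orbT.
by rewrite le_max; apply/orP; left; lra.
Qed.

Lemma envelope_lipschitz (u u' : R) : envelope u <= envelope u' + `|u - u'|.
Proof.
apply: ge_sup; first exact: envelope_ne.
move=> _ [v _ <-]; rewrite -lerBlDr.
apply: le_trans (ub_le_sup (envelope_ub u') _); last by exists v.
rewrite -addrA lerD2l; suff: maxr (v - u') 0 <= maxr (v - u) 0 + `|u - u'| by lra.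
have := ler_norm (u - u'); have := normr_ge0 (u - u').
have := le_max (v - u) (v - u) 0; have := le_max 0 (v - u) 0.
rewrite !lexx orbT => /= ? ? ? ?; rewrite ge_max; apply/andP; split; lra.
Qed.

Lemma envelope_continuous (u : R) : {for u, continuous envelope}.
Proof.
apply/cvgrPdist_lt => e e0; near=> u'.
have uu' : `|u - u'| < e.
  by near: u'; apply: filterS (nbhsx_ballx u e e0) => y; rewrite -ball_normE.
have := envelope_lipschitz u u'; have := envelope_lipschitz u' u.
by rewrite [`|u' - u|]distrC ltr_norml => ? ?; apply/andP; split; lra.
Unshelve. all: by end_near.
Qed.

Lemma F0_le0 : F 0 <= 0.
Proof.
have [//|F0] := lerP (F 0) 0.
have [d d0 /(_ 0 (lexx 0) (ltW d0))] := F_small (divr_gt0 F0 (ltr0Sn _ 1)).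
lra.
Qed.

Lemma majorant0 : majorant 0 = 0.
Proof. by rewrite /majorant ltxx. Qed.

Lemma majorant_ge_id r : 0 <= r -> r <= majorant r.
Proof.
rewrite /majorant; case: ifPn => [r0 _|]; last by rewrite -leNgt.
by rewrite lerDr; exact: unsquash_ge0 (envelope_ge0 _) (envelope_lt1 _).
Qed.

Lemma majorant_ge0 r : 0 <= r -> 0 <= majorant r.
Proof. by move=> r0; apply: le_trans r0 (majorant_ge_id r0). Qed.

Lemma majorant_ge r : 0 <= r -> F r <= majorant r.
Proof.
rewrite /majorant le_eqVlt => /predU1P[<-|r0]; first by rewrite ltxx F0_le0.
rewrite r0 -{1}(squashK (F r)) -[r in F r]lnK //.
apply: le_trans (unsquash_le (envelope_ge _) (envelope_lt1 _)) _.
by rewrite lerDl ltW.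
Qed.

Lemma majorant_lt r s : 0 <= r -> r < s -> majorant r < majorant s.
Proof.
move=> r0 rs; have s0 : 0 < s by exact: le_lt_trans rs.
rewrite /majorant s0; case: ifPn => [r0'|_]; last first.
  by apply: ltr_wpDl => //; exact: unsquash_ge0 (envelope_ge0 _) (envelope_lt1 _).
apply: ler_ltD => //; apply: unsquash_le (envelope_lt1 _); apply: envelope_le.
by rewrite ler_ln ?posrE // ltW.
Qed.

Lemma majorant_continuous_pos x : 0 < x ->
  cont_within [set y : R | 0 <= y] majorant x.
Proof.
move=> x0; apply: cont_within_gt0_ge0 => //.
apply: (@eq_cont_within _ _ _ (fun y => unsquash (envelope (ln y)) + y)) => //.
  by move=> y /= y0; rewrite /majorant y0.
apply: cont_withinD; last exact: cont_within_for cvg_id.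
apply: (@cont_within_comp _ _ _ setT) => //; last first.
  exact/cont_within_for/unsquash_continuous/envelope_lt1.
apply: (@cont_within_comp _ _ _ setT) => //; last first.
  exact/cont_within_for/envelope_continuous.
exact: cont_within_for (continuous_ln x0).
Qed.

(* Near 0 the majorant is dominated by r + F (e r), which vanishes with r. *)
Lemma majorant_continuous0 : cont_within [set y : R | 0 <= y] majorant 0.
Proof.
apply/cont_within_realP => e e0.
have e20 : 0 < e / 2 by rewrite divr_gt0.
have [d d0 Hd] := F_small e20; have E0 := expR_gt0 (1 : R).
exists (minr (d / expR 1) (e / 2)); first by rewrite lt_min e20 andbT divr_gt0.
move=> y /= y0; rewrite majorant0 !sub0r !normrN ger0_norm // lt_min.
rewrite ger0_norm ?majorant_ge0 // => /andP[yd ye].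
rewrite /majorant; case: ifPn => // yp.
have : unsquash (envelope (ln y)) <= F (y * expR 1).
  apply: le_trans (unsquash_le (envelope_le_next _) (log_squash_lt1 _)) _.
  by rewrite squashK expRD lnK.
have : F (y * expR 1) <= e / 2.
  by apply: Hd; rewrite ?mulr_ge0 ?(ltW E0) // -ler_pdivlMr // ltW.
lra.
Qed.

Lemma classKinf_majorant :
  exists a : R -> R, classKinf a /\ forall r, 0 <= r -> F r <= a r.
Proof.
exists majorant; split; last exact: majorant_ge.
split; last first.
  move=> M; have M1 : 0 <= `|M| + 1 by rewrite addr_ge0.
  exists (`|M| + 1); split => //; apply: lt_le_trans (majorant_ge_id M1).
  by have := ler_norm M; lra.
split; [|exact: majorant_lt|exact: majorant_ge0|exact: majorant0].
apply: cont_within_continuous => x /= x0.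
have [xp|x0'] := ltrP 0 x; first exact: majorant_continuous_pos.
have -> : x = 0 by apply/le_anti; rewrite x0 x0'.
exact: majorant_continuous0.
Qed.

End classKinf_majorant.

Section classKinf_inv_conj.
Variables (R : realType) (a : R -> R).
Hypothesis Ka : classKinf a.

Let K := Ka.1.
Let a_unbounded := Ka.2.

(* At [s = 0] the junk value [0^-1 = 0] gives [b 0 = (a 0)^-1 = 0]. *)
Let b (s : R) : R := (a s^-1)^-1.

Lemma inv_conj0 : b 0 = 0.
Proof. by rewrite /b invr0 classK0 ?invr0. Qed.

Lemma inv_conj_gt0 s : 0 < s -> 0 < b s.
Proof. by move=> s0; rewrite invr_gt0 classK_gt0 ?invr_gt0. Qed.

Lemma inv_conj_lt r s : 0 <= r -> r < s -> b r < b s.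
Proof.
move=> r0 rs; have s0 : 0 < s by exact: le_lt_trans rs.
have [rp|r0'] := ltrP 0 r; last first.
  have -> : r = 0 by apply/le_anti; rewrite r0 r0'.
  by rewrite inv_conj0 inv_conj_gt0.
rewrite ltf_pV2 ?posrE ?(classK_gt0 K) ?invr_gt0 //.
by apply: (classK_lt K); rewrite ?invr_ge0 ?ltW ?ltf_pV2 ?posrE.
Qed.

Lemma inv_conj_continuous_pos x : 0 < x -> cont_within [set y : R | 0 <= y] b x.
Proof.
move=> x0; apply: (@cont_within_comp _ _ _ setT) => //; last first.
  by apply/cont_within_for/inv_continuous; rewrite gt_eqF ?(classK_gt0 K) ?invr_gt0.
apply: (@cont_within_comp _ _ _ [set y : R | 0 <= y]).
- by move=> y /=; rewrite invr_ge0.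
- by apply/cont_within_for/inv_continuous; rewrite gt_eqF.
- by apply: continuous_cont_within (classK_continuous K) _; rewrite /= invr_ge0 ltW.
Qed.

Lemma inv_conj_continuous0 : cont_within [set y : R | 0 <= y] b 0.
Proof.
apply/cont_within_realP => e e0; have [r1 [r10 Hr1]] := a_unbounded e^-1.
exists (r1 + 1)^-1; first by rewrite invr_gt0 ltr_wpDl.
move=> y /= y0; rewrite inv_conj0 !sub0r !normrN.
have [yp|y0'] := ltrP 0 y; last first.
  have -> : y = 0 by apply/le_anti; rewrite y0 y0'.
  by rewrite inv_conj0 normr0.
rewrite !ger0_norm ?(ltW (inv_conj_gt0 yp)) // => yd.
have : r1 < y^-1.
  have : r1 + 1 < y^-1 by rewrite -(invrK (r1 + 1)) ltf_pV2 ?posrE ?invr_gt0 ?ltr_wpDl.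
  lra.
move=> /(classK_lt K r10) H; rewrite -(invrK e) ltf_pV2 ?posrE ?invr_gt0 ?(classK_gt0 K) //.
- exact: lt_trans H.
- by rewrite invr_gt0.
Qed.

Lemma inv_conj_unbounded M : exists r, 0 <= r /\ M < b r.
Proof.
have e0 : 0 < (`|M| + 1)^-1 by rewrite invr_gt0 ltr_wpDl.
have [d d0 Hd] := classK_small K e0; have d20 : 0 < d / 2 by rewrite divr_gt0.
exists (d / 2)^-1; split; first by rewrite ltW // invr_gt0.
rewrite /b invrK; have : a (d / 2) < (`|M| + 1)^-1.
  by apply: Hd; rewrite ?ltW // ltr_pdivrMr // ltr_pMr // ltr1n.
rewrite -[a _]invrK ltf_pV2 ?posrE ?invr_gt0 ?(classK_gt0 K) ?ltr_wpDl //.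
by have := ler_norm M; lra.
Qed.

Lemma classKinf_inv_conj : classKinf b.
Proof.
split; last exact: inv_conj_unbounded.
split; [|exact: inv_conj_lt| |exact: inv_conj0].
- apply: cont_within_continuous => x /= x0.
  have [xp|x0'] := ltrP 0 x; first exact: inv_conj_continuous_pos.
  have -> : x = 0 by apply/le_anti; rewrite x0 x0'.
  exact: inv_conj_continuous0.
- move=> r r0; rewrite le_eqVlt in r0; case/predU1P: r0 => [<-|r0].
    by rewrite inv_conj0.
  exact: ltW (inv_conj_gt0 r0).
Qed.

End classKinf_inv_conj.

Section classKinf_minorant.
Variables (R : realType) (h : R -> R).
Hypothesis h_le : forall r s, 0 < r -> r <= s -> h r <= h s.
Hypothesis h_gt0 : forall r, 0 < r -> 0 < h r.
Hypothesis h_unbounded : forall M, exists r, 0 < r /\ M <= h r.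

Let F (r : R) : R := if 0 < r then (h r^-1)^-1 else 0.

Lemma inv_conj_h_ge0 r : 0 <= r -> 0 <= F r.
Proof. by rewrite /F; case: ifP => // r0 _; rewrite invr_ge0 ltW ?h_gt0 ?invr_gt0. Qed.

Lemma inv_conj_h_le r s : 0 <= r -> r <= s -> F r <= F s.
Proof.
move=> r0 rs; rewrite /F; case: ifPn => [rp|_]; last first.
  by case: ifP => // sp; rewrite invr_ge0 ltW ?h_gt0 ?invr_gt0.
have sp : 0 < s by exact: lt_le_trans rs.
rewrite sp lef_pV2 ?posrE ?h_gt0 ?invr_gt0 //.
by apply: h_le; rewrite ?invr_gt0 ?lef_pV2 ?posrE.
Qed.

Lemma inv_conj_h_small e : 0 < e ->
  exists2 d, 0 < d & forall r, 0 <= r -> r <= d -> F r <= e.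
Proof.
move=> e0; have [r0 [r00 Hr0]] := h_unbounded e^-1.
exists r0^-1 => [|r _ rd]; first by rewrite invr_gt0.
rewrite /F; case: ifPn => [rp|_]; last exact: ltW.
have : r0 <= r^-1 by rewrite -(invrK r0) lef_pV2 ?posrE ?invr_gt0.
move=> /(h_le r00) H; rewrite -(invrK e) lef_pV2 ?posrE ?invr_gt0 ?h_gt0 //.
  exact: le_trans H.
by rewrite invr_gt0.
Qed.

(* A K_inf majorant of [r |-> 1 / h (1/r)], conjugated by inversion. *)
Lemma classKinf_minorant :
  exists psi : R -> R, classKinf psi /\ forall s, 0 < s -> psi s <= h s.
Proof.
have [A [KA Amaj]] :=
  classKinf_majorant inv_conj_h_ge0 inv_conj_h_le inv_conj_h_small.
exists (fun s => (A s^-1)^-1); split; first exact: classKinf_inv_conj.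
move=> s s0; have s0' : 0 < s^-1 by rewrite invr_gt0.
have := Amaj s^-1 (ltW s0'); rewrite /F s0' invrK => H.
by rewrite -(invrK (h s)) lef_pV2 ?posrE ?invr_gt0 ?h_gt0 ?(classK_gt0 KA.1).
Qed.

End classKinf_minorant.

Section classKinf_inverse.
Variables (R : realType) (a : R -> R).
Hypothesis Ka : classKinf a.

Let K := Ka.1.
Let below y := [set x : R | 0 <= x /\ a x <= y].

Lemma below_has_ubound y : has_ubound (below y).
Proof.
have [r [r0 Hr]] := Ka.2 y; exists r => x [x0 xy]; rewrite leNgt; apply/negP => rx.
by have := classK_lt K r0 rx; lra.
Qed.

Lemma below0 y : 0 <= y -> below y 0.
Proof. by split; rewrite ?classK0. Qed.

Lemma classKinf_inverse_bound :
  exists A : R -> R, classKinf A /\ forall x y, 0 <= x -> a x <= y -> x <= A y.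
Proof.
pose Fa y := sup (below y).
have Fa_ge0 y : 0 <= y -> 0 <= Fa y.
  by move=> y0; apply: ub_le_sup (below0 y0); exact: below_has_ubound.
have Fa_le y y' : 0 <= y -> y <= y' -> Fa y <= Fa y'.
  move=> y0 yy'; apply: ge_sup; first by exists 0; exact: below0.
  move=> x [x0 xy]; apply: ub_le_sup (below_has_ubound y') _ _.
  by split; last exact: le_trans yy'.
have Fa_small e : 0 < e -> exists2 d, 0 < d & forall r, 0 <= r -> r <= d -> Fa r <= e.
  move=> e0; exists (a e / 2) => [|r r0 rd]; first by rewrite divr_gt0 ?(classK_gt0 K).
  apply: ge_sup; first by exists 0; exact: below0.
  move=> x [x0 xr]; rewrite leNgt; apply/negP => ex.
  by have := classK_lt K (ltW e0) ex; have := classK_gt0 K e0; lra.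
have [A [KA Amaj]] := classKinf_majorant Fa_ge0 Fa_le Fa_small.
exists A; split => // x y x0 xy; have y0 : 0 <= y by exact: le_trans (classK_ge0 K x0) xy.
apply: le_trans (Amaj y y0); apply: ub_le_sup (conj x0 xy).
exact: below_has_ubound.
Qed.

End classKinf_inverse.

Definition shift_invariant (Sigma : Type) (Z : set (biseq Sigma)) :=
  forall z, Z z -> Z (shift z).

Lemma sofic_shift_invariant (Sigma : Type) (Z : set (biseq Sigma)) :
  sofic Z -> shift_invariant Z.
Proof. by move=> [S [E ->]] z [s Hs]; exists (fun k => s (k + 1)) => k; exact: Hs. Qed.

Lemma shift_invariant_iter (Sigma : Type) (Z : set (biseq Sigma)) k z :
  shift_invariant Z -> Z z -> Z (iter k (@shift Sigma) z).
Proof. by move=> HZ Zz; elim: k => //= k; exact: HZ. Qed.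

Lemma PhiS (R : realType) n (Sigma : Type)
    (f : 'rV[R]_n -> biseq Sigma -> 'rV[R]_n) k x z :
  Phi f k (f x z) (shift z) = Phi f k.+1 x z.
Proof. by elim: k => //= k ->; rewrite -iterSr. Qed.

Lemma enorm_ge0 (R : realType) n (x : 'rV[R]_n) : 0 <= enorm x.
Proof. exact: sqrtr_ge0. Qed.

(** * Lyapunov functions give GUAS *)

Lemma expr_le_expR (R : realType) (g : R) k :
  0 <= g -> g ^+ k <= expR (- ((1 - g) * k%:R)).
Proof.
move=> g0; rewrite mulrC -mulrN expRM_natl.
apply: lerXn2r; rewrite ?nnegrE ?expR_ge0 //.
by have := expR_ge1Dx (- (1 - g)); lra.
Qed.

Lemma expR_decay_cvg0 (R : realType) (c k : R) : 0 < c ->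
  expR (- (c * t)) * k @[t --> +oo] --> 0.
Proof.
move=> c0; rewrite -(mul0r k); apply: cvgM; last exact: cvg_cst.
have ct : c * t @[t --> +oo] --> +oo.
  apply/cvgryPge => M; apply: filterS (nbhs_pinfty_ge (num_real (c^-1 * M))).
  by move=> t; rewrite ler_pdivrMl.
exact: cvg_comp _ _ ct (@cvgr_expR R).
Qed.

Lemma classKL_decay (R : realType) (A a : R -> R) (c : R) :
  classK A -> classK a -> 0 < c ->
  classKL (fun r t => A (expR (- (c * t)) * a r)).
Proof.
move=> KA Ka c0.
have y_ge0 r t : 0 <= r -> 0 <= expR (- (c * t)) * a r.
  by move=> r0; rewrite mulr_ge0 ?expR_ge0 ?(classK_ge0 Ka).
have expR_continuous : continuous (fun t : R => expR (- (c * t))).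
  move=> t; apply: (@continuous_comp _ _ _ (fun t => - (c * t)) expR).
    by apply: cvgN; apply: cvgM; [exact: cvg_cst | exact: cvg_id].
  exact: continuous_expR.
split.
- apply: cont_within_continuous => p /= [p1 p2].
  apply: (@cont_within_comp _ _ _ [set y : R | 0 <= y]).
  + by move=> q /= [q1 _]; exact: y_ge0.
  + apply: cont_withinM.
      apply: cont_within_for; apply: (continuous_comp _ (expR_continuous _)).
      exact: cvg_snd.
    apply: (@cont_within_comp _ _ _ [set y : R | 0 <= y]); first by move=> q /= [].
      exact: cont_within_for cvg_fst.
    exact: continuous_cont_within (classK_continuous Ka) p1.
  + exact: continuous_cont_within (classK_continuous KA) (y_ge0 _ _ p1).
- move=> s s0; split.
  + apply: cont_within_continuous => r /= r0.
    apply: (@cont_within_comp _ _ _ [set y : R | 0 <= y]).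
    * by move=> q /= q0; exact: y_ge0.
    * apply: cont_withinM; first exact: cont_within_for (cvg_cst _).
      exact: continuous_cont_within (classK_continuous Ka) r0.
    * exact: continuous_cont_within (classK_continuous KA) (y_ge0 _ _ r0).
  + move=> r r' r0 rr'; apply: (classK_lt KA); first exact: y_ge0.
    by rewrite ltr_pM2l ?expR_gt0 // (classK_lt Ka).
  + by move=> r r0; exact: classK_ge0 KA _ (y_ge0 _ _ r0).
  + by rewrite (classK0 Ka) mulr0 (classK0 KA).
- move=> r r0; split.
    move=> s t _ st; apply: (classK_le KA); first exact: y_ge0.
    apply: ler_wpM2r; first exact: classK_ge0 Ka _ r0.
    by rewrite ler_expR lerN2 ler_wpM2l // ltW.
  apply/cvgrPdist_lt => e e0; have [d d0 Hd] := classK_small KA e0.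
  (* the filter instance is not found through [nbhs +oo] *)
  have := cvgr_dist_lt (FF := proper_pinfty_nbhs) _ _
    (expR_decay_cvg0 (a r) c0) _ d0.
  apply: filterS => t /=.
  rewrite !sub0r !normrN !ger0_norm ?(classK_ge0 KA) ?y_ge0 //.
  exact: Hd (y_ge0 _ _ r0).
Qed.

Section seq_lyapunov_GUAS.
Variables (R : realType) (Sigma : Type) (Z : set (biseq Sigma)) (n : nat).
Variables (f : 'rV[R]_n -> biseq Sigma -> 'rV[R]_n) (V : 'rV[R]_n -> biseq Sigma -> R).
Variables (a1 a2 : R -> R) (g : R).
Hypothesis HZ : shift_invariant Z.
Hypothesis Ka1 : classKinf a1.
Hypothesis Ka2 : classKinf a2.
Hypothesis g0 : 0 <= g.
Hypothesis HV : forall x z, Z z ->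
  [/\ a1 (enorm x) <= V x z, V x z <= a2 (enorm x) &
      V (f x z) (shift z) <= g * V x z].

Lemma lyapunov_iter k x z : Z z ->
  V (Phi f k x z) (iter k (@shift Sigma) z) <= g ^+ k * V x z.
Proof.
move=> Zz; elim: k => [|k IH] /=; first by rewrite expr0 mul1r.
have [_ _ HVk] := HV (Phi f k x z) (shift_invariant_iter k HZ Zz).
by apply: le_trans HVk _; rewrite exprS -mulrA ler_wpM2l.
Qed.

Lemma lyapunov_trajectory_bound : exists A : R -> R, classKinf A /\
  forall k x z, Z z ->
    enorm (Phi f k x z) <= A (expR (- ((1 - g) * k%:R)) * a2 (enorm x)).
Proof.
have [A [KA HA]] := classKinf_inverse_bound Ka1.
exists A; split => // k x z Zz; apply: HA; first exact: enorm_ge0.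
have [HVl _ _] := HV (Phi f k x z) (shift_invariant_iter k HZ Zz).
have [_ HVu _] := HV x Zz.
apply: le_trans HVl (le_trans (lyapunov_iter k x Zz) _).
apply: le_trans (ler_wpM2l (exprn_ge0 _ g0) HVu) _.
apply: ler_wpM2r; first exact/(classK_ge0 Ka2.1)/enorm_ge0.
exact: expr_le_expR.
Qed.

End seq_lyapunov_GUAS.

Lemma seq_lyapunov_GUAS (R : realType) (Sigma : Type) (Z : set (biseq Sigma))
    (n : nat) (f : 'rV[R]_n -> biseq Sigma -> 'rV[R]_n) V :
  shift_invariant Z -> seq_lyapunov Z f V -> GUAS Z f.
Proof.
move=> HZ [a1 [a2 [g [Ka1 Ka2 g0 g1 HV]]]].
have [A [KA HA]] := lyapunov_trajectory_bound HZ Ka1 Ka2 g0 HV.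
exists (fun r t => A (expR (- ((1 - g) * t)) * a2 r)); split; last exact: HA.
by apply: classKL_decay; rewrite ?subr_gt0; [exact: KA.1 | exact: Ka2.1 |].
Qed.

(** * GUAS gives Lyapunov functions *)

Section GUAS_seq_lyapunov.
Variables (R : realType) (Sigma : Type) (Z : set (biseq Sigma)) (n : nat).
Variables (f : 'rV[R]_n -> biseq Sigma -> 'rV[R]_n) (b : R -> R -> R).
Hypothesis Kb : classKL b.
Hypothesis Hb : forall k x z, Z z -> enorm (Phi f k x z) <= b (enorm x) k%:R.

Let B r (k : nat) := b r k%:R.

Lemma KL_classK k : classK (fun r => B r k).
Proof. by case: Kb => _ + _; apply. Qed.

Lemma KL_ge0 r k : 0 <= r -> 0 <= B r k.
Proof. exact: classK_ge0 (KL_classK k) r. Qed.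

Lemma KL_le r r' k : 0 <= r -> r <= r' -> B r k <= B r' k.
Proof. exact: classK_le (KL_classK k) r r'. Qed.

Lemma KL_le0 r k : 0 <= r -> B r k <= B r 0.
Proof. by move=> r0; case: Kb => _ _ /(_ r r0) [+ _]; apply. Qed.

Lemma KL_eventually_lt r e : 0 <= r -> 0 < e ->
  exists N : nat, forall j, (N <= j)%N -> B r j < e.
Proof.
move=> r0 e0; case: Kb => _ _ /(_ r r0) [_ /cvgrPdist_lt /(_ e e0) [M [_ HM]]].
exists (archi_bound `|M|) => j Nj.
have := HM j%:R; rewrite sub0r normrN ger0_norm ?KL_ge0 //; apply.
apply: le_lt_trans (ler_norm M) _; apply: lt_le_trans (archi_boundP (normr_ge0 M)) _.
by rewrite ler_nat.
Qed.

(* [settled s N]: from time [N] on, trajectories starting in the ball of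
   radius [1/s] stay below [s]; [tau s] is the least such [N]. *)
Let settled s N := `[< forall j, (N <= j)%N -> B s^-1 j < s >].

Lemma settled_ex s : 0 < s -> exists N, settled s N.
Proof.
move=> s0; have s0' : 0 <= s^-1 by rewrite invr_ge0 ltW.
have [N HN] := KL_eventually_lt s0' s0.
by exists N; apply/asboolP.
Qed.

Let tau s := if pselect (0 < s) is left s0 then ex_minn (settled_ex s0) else 0%N.

Lemma tauP s : 0 < s -> forall j, (tau s <= j)%N -> B s^-1 j < s.
Proof.
by move=> s0; rewrite /tau; case: pselect => // s0'; case: ex_minnP => m /asboolP.
Qed.

Lemma tau_min s N : 0 < s -> (forall j, (N <= j)%N -> B s^-1 j < s) -> (tau s <= N)%N.
Proof.
move=> s0 HN; rewrite /tau; case: pselect => // s0'.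
by case: ex_minnP => m _; apply; apply/asboolP.
Qed.

Lemma tau_gt s k : 0 < s -> s <= B s^-1 k -> (k < tau s)%N.
Proof. by move=> s0 sB; rewrite ltnNge; apply/negP => /(tauP s0); lra. Qed.

Lemma tau_le s s' : 0 < s -> s <= s' -> (tau s' <= tau s)%N.
Proof.
move=> s0 ss'; have s'0 : 0 < s' by exact: lt_le_trans ss'.
apply: tau_min => // j /(tauP s0) Hj.
have : B s'^-1 j <= B s^-1 j.
  by apply: KL_le; [rewrite invr_ge0 ltW | rewrite lef_pV2 ?posrE].
lra.
Qed.

Let h s := s / 2 ^+ tau s.

Lemma h_le r s : 0 < r -> r <= s -> h r <= h s.
Proof.
move=> r0 rs; have s0 : 0 < s by exact: lt_le_trans rs.
apply: (@le_trans _ _ (r / 2 ^+ tau s)).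
  rewrite ler_pM2l // lef_pV2 ?posrE ?exprn_gt0 // ler_weXn2l ?ler1n //.
  exact: tau_le.
by apply: ler_wpM2r; rewrite ?invr_ge0 ?exprn_ge0.
Qed.

Lemma h_gt0 r : 0 < r -> 0 < h r.
Proof. by move=> r0; rewrite divr_gt0 // exprn_gt0. Qed.

Lemma h_unbounded M : exists r, 0 < r /\ M <= h r.
Proof.
pose s := maxr 1 (maxr (B 1 0 + 1) M).
have s1 : 1 <= s by rewrite le_max lexx.
have s0 : 0 < s by exact: lt_le_trans ltr01 s1.
have tau0 : tau s = 0%N.
  apply/eqP; rewrite -leqn0; apply: tau_min => // j _.
  have si0 : 0 <= s^-1 by rewrite invr_ge0 ltW.
  have : B 1 0 + 1 <= s by rewrite !le_max lexx orbT.
  have si1 : s^-1 <= 1 by rewrite invf_le1.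
  have := KL_le0 j si0; have := KL_le 0 si0 si1.
  lra.
by exists s; rewrite /h tau0 expr0 divr1 !le_max lexx !orbT.
Qed.

Section weighted_sup.
Variable psi : R -> R.
Hypothesis Kpsi : classKinf psi.
Hypothesis psi_le_h : forall s, 0 < s -> psi s <= h s.

Let Kpsi1 := Kpsi.1.

(* If [|x| <= 1/s] with [s = B |x| k] then [k < tau s], so the weight [2^k]
   is absorbed by [psi s <= s / 2^(tau s)]. *)
Lemma weighted_le_settled r k : 0 <= r -> 0 < B r k -> r <= (B r k)^-1 ->
  2 ^+ k * psi (B r k) <= B r 0.
Proof.
move=> r0 s0 rs; have kt : (k < tau (B r k))%N by apply: tau_gt; rewrite // KL_le.
apply: le_trans (KL_le0 k r0).
apply: le_trans (_ : 2 ^+ k * h (B r k) <= _); first by rewrite ler_pM2l ?exprn_gt0 ?psi_le_h.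
rewrite /h mulrCA ger_pMr // ler_pdivrMr ?exprn_gt0 // mul1r.
by rewrite ler_weXn2l ?ler1n // ltnW.
Qed.

Lemma weighted_le r k N : 0 < r -> (forall j, (N <= j)%N -> B r j < r^-1) ->
  2 ^+ k * psi (B r k) <= maxr (B r 0) (2 ^+ N * psi (B r 0)).
Proof.
move=> r0 HN; have [s0|sp] := eqVneq (B r k) 0.
  by rewrite s0 (classK0 Kpsi1) mulr0 le_max KL_ge0 // ltW.
have {}sp : 0 < B r k by rewrite lt_def sp KL_ge0 // ltW.
have [rs|sr] := lerP r (B r k)^-1.
  by apply: le_trans (weighted_le_settled (ltW r0) sp rs) _; rewrite le_max lexx.
have kN : (k < N)%N.
  rewrite ltnNge; apply/negP => /HN; rewrite -[B r k]invrK ltf_pV2 ?posrE ?invr_gt0 //.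
  by rewrite ltNge (ltW sr).
rewrite le_max; apply/orP; right; apply: ler_pM.
- exact: exprn_ge0.
- exact: classK_ge0 Kpsi1 _ (KL_ge0 _ (ltW r0)).
- by rewrite ler_weXn2l ?ler1n // ltnW.
- apply: (classK_le Kpsi1); first exact: KL_ge0 k (ltW r0).
  exact: KL_le0 k (ltW r0).
Qed.

Lemma weighted_le_small r k : 0 <= r -> r <= 1 -> r * B 1 0 < 1 ->
  2 ^+ k * psi (B r k) <= B r 0.
Proof.
move=> r0 r1 rB; have [s0|sp] := eqVneq (B r k) 0.
  by rewrite s0 (classK0 Kpsi1) mulr0 KL_ge0.
have {}sp : 0 < B r k by rewrite lt_def sp KL_ge0.
apply: weighted_le_settled => //.
have : B r k <= B 1 0 by apply: le_trans (KL_le0 k r0) (KL_le 0 r0 r1).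
move=> /(ler_wpM2l r0) rBk; rewrite -div1r ler_pdivlMr //.
exact: ltW (le_lt_trans rBk rB).
Qed.

Let weighted r := [set (2 : R) ^+ k * psi (B r k) | k in [set: nat]].

Lemma weighted_ne r : weighted r !=set0.
Proof. by exists (2 ^+ 0 * psi (B r 0)); exists 0%N. Qed.

Lemma weighted_has_ubound r : 0 <= r -> has_ubound (weighted r).
Proof.
rewrite le_eqVlt => /predU1P[<-|r0].
  by exists 0 => _ [k _ <-]; rewrite (classK0 (KL_classK k)) (classK0 Kpsi1) mulr0.
have [N HN] : exists N : nat, forall j, (N <= j)%N -> B r j < r^-1.
  by apply: KL_eventually_lt; rewrite ?invr_gt0 // ltW.
by exists (maxr (B r 0) (2 ^+ N * psi (B r 0))) => _ [k _ <-]; exact: weighted_le.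
Qed.

Let bound r := sup (weighted r).

Lemma weighted_le_bound r k : 0 <= r -> 2 ^+ k * psi (B r k) <= bound r.
Proof. by move=> r0; apply: ub_le_sup; [exact: weighted_has_ubound | exists k]. Qed.

Lemma bound_ge0 r : 0 <= r -> 0 <= bound r.
Proof.
move=> r0; apply: le_trans (weighted_le_bound 0 r0).
by rewrite expr0 mul1r (classK_ge0 Kpsi1) ?KL_ge0.
Qed.

Lemma bound_le r s : 0 <= r -> r <= s -> bound r <= bound s.
Proof.
move=> r0 rs; apply: ge_sup; first exact: weighted_ne.
move=> _ [k _ <-]; apply: le_trans (weighted_le_bound k (le_trans r0 rs)).
rewrite ler_wpM2l ?exprn_ge0 //; apply: (classK_le Kpsi1); first exact: KL_ge0.
exact: KL_le.
Qed.

Lemma bound_small e : 0 < e ->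
  exists2 d, 0 < d & forall r, 0 <= r -> r <= d -> bound r <= e.
Proof.
move=> e0; have [d1 d10 Hd1] := classK_small (KL_classK 0) e0.
have B10 : 0 <= B 1 0 by exact: KL_ge0.
have c0 : 0 < (B 1 0 + 1)^-1 by rewrite invr_gt0; lra.
exists (minr (d1 / 2) (minr 1 (B 1 0 + 1)^-1)); first by rewrite !lt_min divr_gt0 //= ltr01.
move=> r r0; rewrite !le_min => /andP[rd /andP[r1 rc]].
have rB : r * B 1 0 < 1.
  apply: le_lt_trans (ler_wpM2r B10 rc) _.
  by rewrite mulrC -/(B 1 0 / (B 1 0 + 1)) ltr_pdivrMr ?mul1r; lra.
apply: ge_sup; first exact: weighted_ne.
move=> _ [k _ <-]; apply: le_trans (weighted_le_small k r0 r1 rB) _.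
by apply/ltW/Hd1; lra.
Qed.

Lemma weighted_lyapunov : exists V, seq_lyapunov Z f V.
Proof.
have [a2 [Ka2 Ha2]] := classKinf_majorant bound_ge0 bound_le bound_small.
pose weighted_traj x z := [set (2 : R) ^+ k * psi (enorm (Phi f k x z)) | k in [set: nat]].
have traj_ne x z : weighted_traj x z !=set0.
  by exists (2 ^+ 0 * psi (enorm (Phi f 0 x z))); exists 0%N.
have traj_ub x z : Z z -> ubound (weighted_traj x z) (a2 (enorm x)).
  move=> Zz _ [k _ <-]; apply: le_trans (Ha2 _ (enorm_ge0 x)).
  apply: le_trans (weighted_le_bound k (enorm_ge0 x)).
  rewrite ler_wpM2l ?exprn_ge0 //; apply: (classK_le Kpsi1); first exact: enorm_ge0.
  exact: Hb.
have traj_le x z k : Z z ->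
    2 ^+ k * psi (enorm (Phi f k x z)) <= sup (weighted_traj x z).
  by move=> Zz; apply: ub_le_sup; [exists (a2 (enorm x)); exact: traj_ub | exists k].
exists (fun x z => sup (weighted_traj x z)), psi, a2, (1 / 2); split => //.
- by rewrite ltr_pdivrMr // mul1r ltr1n.
move=> x z Zz; split.
- by have := traj_le x z 0%N Zz; rewrite expr0 mul1r.
- by apply: ge_sup; [exact: traj_ne | exact: traj_ub].
- apply: ge_sup; first exact: traj_ne.
  move=> _ [k _ <-]; rewrite PhiS; have := traj_le x z k.+1 Zz.
  by rewrite exprS -mulrA; lra.
Qed.

End weighted_sup.

Lemma GUAS_KL_seq_lyapunov : exists V, seq_lyapunov Z f V.
Proof.
have [psi [Kpsi psi_le_h]] := classKinf_minorant h_le h_gt0 h_unbounded.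
exact: weighted_lyapunov Kpsi psi_le_h.
Qed.

End GUAS_seq_lyapunov.

Lemma GUAS_seq_lyapunov (R : realType) (Sigma : Type) (Z : set (biseq Sigma))
    (n : nat) (f : 'rV[R]_n -> biseq Sigma -> 'rV[R]_n) :
  GUAS Z f -> exists V, seq_lyapunov Z f V.
Proof. by move=> [b [Kb Hb]]; exact: GUAS_KL_seq_lyapunov Kb Hb. Qed.

Unset Implicit Arguments.
Theorem mainTheorem1 (R : realType) (Sigma : countType) (HSigma : inhabited Sigma)
  (Z : set (biseq Sigma)) (HZ : sofic Z) (n : nat)
  (f : 'rV[R]_n -> biseq Sigma -> 'rV[R]_n) :
  GUAS Z f <-> exists V : 'rV[R]_n -> biseq Sigma -> R, seq_lyapunov Z f V.
Proof.
split; first exact: GUAS_seq_lyapunov.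
by move=> [V HV]; apply: seq_lyapunov_GUAS HV; exact: sofic_shift_invariant.
Qed.
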